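(* Let $P$ be a finite set of points in the plane, $G$ its $\Theta_4$-graph, and $s,t\in P$ distinct. Let $u$ and $v$ be two consecutive vertices on the path $\mathcal{P}(s,t)$ followed by the routing algorithm described below from $s$ to $t$. Then $L_\infty(u,t)\ge L_\infty(v,t)$, where $L_\infty(a,b)=\max\{|a_x-b_x|,|a_y-b_y|\}$.
   Context: Cones: for a point $v=(v_x,v_y)$, let $C_0^v=\{(x,y):x\ge v_x,\ y\le v_y\}$, $C_1^v=\{x\ge v_x,\ y\ge v_y\}$, $C_2^v=\{x\le v_x,\ y\ge v_y\}$, $C_3^v=\{x\le v_x,\ y\le v_y\}$, with bisector directions $d_0=(1,-1)$, $d_1=(1,1)$, $d_2=(-1,1)$, $d_3=(-1,-1)$. The $\Theta_4$-graph of $P$ has, for each $v\in P$ and each $i$ with $(P\setminus\{v\})\cap C_i^v\neq\emptyset$, a directed edge $(v,w)$ where $w\in(P\setminus\{v\})\cap C_i^v$ minimizes $\langle w-v,d_i\rangle$ (ties broken arbitrarily); $w$ is the neighbour of $v$ in $C_i^v$. The algorithm: Let $\ell$ be the line through $t$ of slope $+1$ or $-1$ that bisects a cone $C_i^t$ containing $s$. For a vertex $v$: if $v\in\ell$, $T(v,\ell)=\{v\}$; otherwise let $H$ be the closed half-plane bounded by $\ell$ containing $v$, $C$ the cone $C_j^v$ whose bisector direction is perpendicular to $\ell$ and points from $v$ towards $\ell$, and $T(v,\ell)=C\cap H$. $v$ is clean if $T(v,\ell)$ contains no point of $P$ other than $v$. A sweeping step from $v$ goes to the neighbour of $v$ in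 $C$; a greedy step from $v$ goes to the neighbour of $v$ in the cone $C_i^v$ containing $t$. Starting from $v=s$, while $v\neq t$, the algorithm takes a sweeping step if $v$ is not clean and a greedy step otherwise. *)

From mathcomp Require Import all_boot all_order all_algebra.
Set Implicit Arguments. Unset Strict Implicit. Unset Printing Implicit Defensive.
Import Order.TTheory GRing.Theory Num.Theory.
Local Open Scope ring_scope.

Section Theta4.
Variable R : realFieldType.
Notation pt := (R * R)%type.

Definition dot (a b : pt) : R := a.1 * b.1 + a.2 * b.2.
Definition psub (a b : pt) : pt := (a.1 - b.1, a.2 - b.2).

Definition dir (i : 'I_4) : pt :=
  match val i with
  | 0 => (1, -1)
  | 1 => (1, 1)
  | 2 => (-1, 1)
  | _ => (-1, -1)
  end.

Definition in_cone (i : 'I_4) (v w : pt) : bool :=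
  match val i with
  | 0 => (v.1 <= w.1) && (w.2 <= v.2)
  | 1 => (v.1 <= w.1) && (v.2 <= w.2)
  | 2 => (w.1 <= v.1) && (v.2 <= w.2)
  | _ => (w.1 <= v.1) && (w.2 <= v.2)
  end.

(* nb v i is the neighbour of v in C_i^v in the Theta_4-graph of P
   (ties broken arbitrarily, encoded by the choice function nb). *)
Definition theta4_nb (P : seq pt) (nb : pt -> 'I_4 -> pt) : Prop :=
  forall v i, v \in P ->
    (exists w, [/\ w \in P, w != v & in_cone i v w]) ->
    [/\ nb v i \in P, nb v i != v, in_cone i v (nb v i) &
        forall w, w \in P -> w != v -> in_cone i v w ->
          dot (psub (nb v i) v) (dir i) <= dot (psub w v) (dir i)].

(* l is the line through t with direction d_i (bisecting C_i^t);
   nrm i is a normal vector of l. *)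
Definition nrm (i : 'I_4) : pt := (- (dir i).2, (dir i).1).

(* p lies in the closed half-plane bounded by l that contains v *)
Definition in_H (i : 'I_4) (t v p : pt) : bool :=
  0 <= dot (psub p t) (nrm i) * dot (psub v t) (nrm i).

(* C_j^v is the cone whose bisector is perpendicular to l and points from v towards l *)
Definition sweep_cone (i : 'I_4) (t v : pt) (j : 'I_4) : bool :=
  (dot (dir j) (dir i) == 0) && (0 < dot (psub t v) (dir j)).

(* v is clean: T(v,l) = C \cap H contains no point of P other than v.
   If v lies on l there is no sweep cone and T(v,l) = {v}, so v is clean. *)
Definition clean (P : seq pt) (i : 'I_4) (t v : pt) : Prop :=
  forall j w, sweep_cone i t v j -> w \in P -> w != v -> in_cone j v w ->
    ~~ in_H i t v w.

Definition alg_step (P : seq pt) (nb : pt -> 'I_4 -> pt) (i : 'I_4) (t u v : pt)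
  : Prop :=
  u != t /\
  ((~ clean P i t u /\ exists j, sweep_cone i t u j /\ v = nb u j) \/
   (clean P i t u /\ exists k, in_cone k u t /\ v = nb u k)).

Inductive visited (P : seq pt) (nb : pt -> 'I_4 -> pt) (i : 'I_4) (s t : pt)
  : pt -> Prop :=
  | visited_start : visited P nb i s t s
  | visited_step u v : visited P nb i s t u -> alg_step P nb i t u v ->
      visited P nb i s t v.

Definition Linf (a b : pt) : R := Num.max `|a.1 - b.1| `|a.2 - b.2|.

End Theta4.

From mathcomp Require Import all_boot all_order all_algebra.
From mathcomp Require Import lra.
From Stdlib Require Import Classical.
Import Order.TTheory GRing.Theory Num.Theory.
Local Open Scope ring_scope.

(* Every step, sweeping or greedy, goes from u to the neighbour v of u in some
   cone C_j^u that contains a point w of P with <w - u, d_j> <= <t - u, d_j>: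
   for a greedy step w = t, for a sweeping step w is a point of T(u, l), and l
   is perpendicular to d_j through t.  Hence v lies in the triangle
   {p in C_j^u | <p - u, d_j> <= <t - u, d_j>}, which is contained in the
   L_inf-ball around t passing through u. *)

Section Theta4Routing.
Context {R : realFieldType}.
Implicit Types (t u v w : R * R) (i j k : 'I_4).

Ltac unfold_geometry :=
  unfold in_cone, in_H, sweep_cone, dot, psub, nrm, dir in *; simpl in *.

Lemma Linf_le_in_cone {j t u v} :
  in_cone j u v -> dot (psub v u) (dir R j) <= dot (psub t u) (dir R j) ->
  Linf v t <= Linf u t.
Proof.
rewrite /Linf; set M := Num.max `|u.1 - t.1| _.
have /ler_normlP[ge1 le1] : `|u.1 - t.1| <= M by rewrite /M le_max lexx.
have /ler_normlP[ge2 le2] : `|u.2 - t.2| <= M by rewrite /M le_max lexx orbT.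
rewrite ge_max; case: j => -[|[|[|[|//]]]] lt_j /=; unfold_geometry;
  by move=> /andP[? ?] ?; apply/andP; split; apply/ler_normlP; split; lra.
Qed.

Lemma sweep_cone_uniq {i t u j j'} :
  sweep_cone i t u j -> sweep_cone i t u j' -> j = j'.
Proof.
move=> /andP[/eqP + +] /andP[/eqP + +].
case: i => -[|[|[|[|//]]]] ?; case: j => -[|[|[|[|//]]]] lt_j;
  case: j' => -[|[|[|[|//]]]] lt_j' /=; unfold_geometry;
  by move=> *; first [exact: val_inj | exfalso; lra].
Qed.

(* The sweep cone's bisector is the normal of l pointing from u to t, so the
   half-plane H containing u is {p | <p - t, d_j> <= 0}. *)
Lemma in_H_sweep_cone {i t u j w} :
  sweep_cone i t u j -> in_H i t u w ->
  dot (psub w u) (dir R j) <= dot (psub t u) (dir R j).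
Proof.
move=> /andP[/eqP]; case: i => -[|[|[|[|//]]]] ?; case: j => -[|[|[|[|//]]]] ?;
  unfold_geometry; move=> *; nra.
Qed.

Context {P : seq (R * R)} {nb : R * R -> 'I_4 -> R * R}.
Hypothesis theta4P : theta4_nb P nb.

Lemma not_clean_witness {i t u} :
  ~ clean P i t u -> exists j w,
    [/\ sweep_cone i t u j, w \in P, w != u, in_cone j u w & in_H i t u w].
Proof.
move=> not_clean; apply: NNPP => no_witness; apply: not_clean => j w *.
by apply/negP => ?; apply: no_witness; exists j, w.
Qed.

Lemma alg_step_cone {i t u v} :
  t \in P -> alg_step P nb i t u v -> exists j w,
    [/\ v = nb u j, w \in P, w != u, in_cone j u w &
        dot (psub w u) (dir R j) <= dot (psub t u) (dir R j)].
Proof.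
move=> tP [ut [[/not_clean_witness [j' [w [sw' wP wu wc wH]]] [j [sw ->]]]
              | [_ [k [tc ->]]]]].
- have ej := sweep_cone_uniq sw sw'; subst j'.
  by exists j, w; split=> //; apply: in_H_sweep_cone sw wH.
- by exists k, t; split; rewrite // eq_sym.
Qed.

Lemma alg_step_Linf {i t u v} :
  u \in P -> t \in P -> alg_step P nb i t u v ->
  v \in P /\ Linf v t <= Linf u t.
Proof.
move=> uP tP /(alg_step_cone tP) [j [w [-> wP wu wc wt]]].
have [vP _ vc vmin] := theta4P u j uP (ex_intro _ w (And3 wP wu wc)).
split=> //; apply: (Linf_le_in_cone vc).
exact: le_trans (vmin w wP wu wc) wt.
Qed.

Lemma visited_in {i s t u} :
  s \in P -> t \in P -> visited P nb i s t u -> u \in P.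
Proof.
move=> sP tP; elim=> // u' v _ u'P st.
by have [] := alg_step_Linf u'P tP st.
Qed.

End Theta4Routing.

Theorem lemma1 (R : realFieldType) (P : seq (R * R)) (nb : R * R -> 'I_4 -> R * R)
  (s t : R * R) (i : 'I_4) (u v : R * R) :
  theta4_nb P nb -> s \in P -> t \in P -> s != t -> in_cone i t s ->
  visited P nb i s t u -> alg_step P nb i t u v ->
  Linf v t <= Linf u t.
Proof.
(* Every step is monotone, whichever line l is used. *)
move=> theta4P sP tP _ _ vis st.
by have [] := alg_step_Linf theta4P (visited_in theta4P sP tP vis) tP st.
Qed.
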